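(* For every $1\le i\le k$ and every set $S\subseteq V_i$, the reduction procedure on $\mathbf{T}_i$ with input $S$ is well-defined: in Step 1 and in Step 2 no vertex of the current syndrome set is paired with more than one other vertex, and in Step 3 no vertex is shifted more than once. Moreover its output $\hat{\mathbf{e}}_i$ satisfies $S\,\triangle\,\sigma(\hat{\mathbf{e}}_i)\subseteq V_{i-1}$.
   Context: Fix $k\ge1$. Let $\mathbf{T}_k=(V_k,E_k)$ be the Cayley graph of $\mathbb{Z}/2^k\mathbb{Z}\times\mathbb{Z}/2^k\mathbb{Z}$ with generators $(\pm1,0),(0,\pm1)$. For $\hat{\mathbf{e}}\in\mathbb{F}_2^{E_k}$, $\sigma(\hat{\mathbf{e}})$ is the set of vertices incident to an odd number of edges of $\hat{\mathbf{e}}$. For $0\le i\le k$ let $h_i=2^{k-i}$, let $V_i$ be the subgroup generated by $(h_i,0),(0,h_i)$, and let $\mathbf{T}_i$ be the graph on $V_i$ joining vertices differing by $\pm h_i$ in exactly one coordinate; each edge of $\mathbf{T}_i$ is identified with the straight path of length $h_i$ in $\mathbf{T}_k$, and flipping an edge of $\mathbf{T}_i$ means adding (mod 2) all edges of that path to $\hat{\mathbf{e}}_i$. For $i\ge1$, a cell of $\mathbf{T}_i$ is a face: with $h=h_i$, vertices $\alpha=(x,y)$, $\beta=(x+h,y)$, $\gamma=(x,y-h)$, $\delta=(x+h,y-h)$ and edges $t=\alpha\beta$, $b=\gamma\delta$, $l=\alpha\gamma$, $r=\beta\delta$. A block of $\mathbf{T}_i$ is a square of side $2h$ with top-left corner in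 $V_{i-1}$ (a face of $\mathbf{T}_{i-1}$), made of four cells $A$ (top-left), $B$ (top-right), $C$ (bottom-left), $D$ (bottom-right). Reduction procedure on $\mathbf{T}_i$ (input $S\subseteq V_i$, output $\hat{\mathbf{e}}_i$ initially $0$; in each step the tests use $S$ as at the start of that step, all blocks simultaneously). Step 1: in the $D$ cell of every block, if $\alpha,\delta\in S$ flip $l,b$ (pairing $\alpha$ with $\delta$); if $\beta,\gamma\in S$ flip $b,r$ (pairing $\beta$ with $\gamma$); if all four are in $S$ only $l$ and $r$ are flipped; then remove paired vertices from $S$. Step 2: in the $C$ cell of every block, if $\alpha,\gamma\in S$ flip $l$, if $\beta,\delta\in S$ flip $r$; in the $B$ cell of every block, if $\alpha,\beta\in S$ flip $t$, if $\gamma,\delta\in S$ flip $b$ (each such instruction pairs the two vertices); then remove paired vertices from $S$. Step 3: in the $A$ cell of every block, if $\beta\in S$ flip $t$, if $\gamma\in S$ flip $l$, if $\delta\in S$ flip $l$ and $b$ (each shifting that vertex to $\alpha$). *)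

From mathcomp Require Import all_boot all_algebra.
Set Implicit Arguments. Unset Strict Implicit. Unset Printing Implicit Defensive.
Import GRing.Theory.

(* Vertices of T_k: Z/2^k x Z/2^k  (k >= 1 is assumed wherever used). *)
Notation Vtx k := ('Z_(2^k) * 'Z_(2^k))%type.
(* Edges of T_k: (v,false) is the edge v -- v+(1,0); (v,true) is v -- v+(0,1). *)
Notation Edge k := (Vtx k * bool)%type.

Local Open Scope ring_scope.

Definition off k (v : Vtx k) (dx dy : int) : Vtx k := (v.1 + dx%:~R, v.2 + dy%:~R).

Definition hh (k i : nat) : nat := (2 ^ (k - i))%N.

Definition Vset k i : {set Vtx k} :=
  [set (((a * hh k i)%N%:R, (b * hh k i)%N%:R) : Vtx k) | a : 'I_(2^k), b : 'I_(2^k)].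

Definition ends2 k (e : Edge k) : Vtx k := if e.2 then off e.1 0 1 else off e.1 1 0.
Definition incident k (v : Vtx k) (e : Edge k) : bool := (e.1 == v) || (ends2 e == v).

Definition sigma k (e : {set Edge k}) : {set Vtx k} :=
  [set v | odd #|[set ed in e | incident v ed]|].

Definition symd (T : finType) (A B : {set T}) : {set T} := (A :\: B) :|: (B :\: A).

Definition hpath k (p : Vtx k) (len : nat) : {set Edge k} :=
  [set (off p (j : nat)%:Z 0, false) | j : 'I_len].
Definition vpath k (p : Vtx k) (len : nat) : {set Edge k} :=
  [set (off p 0 (j : nat)%:Z, true) | j : 'I_len].

Section Procedure.
Variables (k i : nat).
Let h : int := (hh k i)%:Z.

(* corners of a cell with top-left corner a *)
Definition c_al (a : Vtx k) : Vtx k := a.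
Definition c_be (a : Vtx k) : Vtx k := off a h 0.
Definition c_ga (a : Vtx k) : Vtx k := off a 0 (- h).
Definition c_de (a : Vtx k) : Vtx k := off a h (- h).
Definition e_t (a : Vtx k) := hpath (c_al a) (hh k i).
Definition e_b (a : Vtx k) := hpath (c_ga a) (hh k i).
Definition e_l (a : Vtx k) := vpath (c_ga a) (hh k i).
Definition e_r (a : Vtx k) := vpath (c_de a) (hh k i).

Definition cellA (c : Vtx k) := c.
Definition cellB (c : Vtx k) := off c h 0.
Definition cellC (c : Vtx k) := off c 0 (- h).
Definition cellD (c : Vtx k) := off c h (- h).

(* blocks: top-left corners in V_{i-1} *)
Definition blocks : seq (Vtx k) := enum (Vset k (i - 1)).

Definition step1_pairs (S : {set Vtx k}) (c : Vtx k) : seq (Vtx k * Vtx k) :=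
  let a := cellD c in
  (if (c_al a \in S) && (c_de a \in S) then [:: (c_al a, c_de a)] else [::]) ++
  (if (c_be a \in S) && (c_ga a \in S) then [:: (c_be a, c_ga a)] else [::]).

Definition step1_flips (S : {set Vtx k}) (c : Vtx k) : seq {set Edge k} :=
  let a := cellD c in
  let ad := (c_al a \in S) && (c_de a \in S) in
  let bg := (c_be a \in S) && (c_ga a \in S) in
  if ad && bg then [:: e_l a; e_r a]
  else if ad then [:: e_l a; e_b a]
  else if bg then [:: e_b a; e_r a]
  else [::].

Definition pairs1 S := flatten [seq step1_pairs S c | c <- blocks].

Definition in_pairs (ps : seq (Vtx k * Vtx k)) (v : Vtx k) : bool :=
  has (fun p => (p.1 == v) || (p.2 == v)) ps.

Definition paired_in (ps : seq (Vtx k * Vtx k)) (u v : Vtx k) : bool :=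
  ((u, v) \in ps) || ((v, u) \in ps).

Definition S1 S : {set Vtx k} := S :\: [set v | in_pairs (pairs1 S) v].

Definition step2_instr (S : {set Vtx k}) (c : Vtx k)
  : seq ((Vtx k * Vtx k) * {set Edge k}) :=
  let a := cellC c in let b := cellB c in
  [seq ins <- [:: ((c_al a, c_ga a), e_l a); ((c_be a, c_de a), e_r a);
                  ((c_al b, c_be b), e_t b); ((c_ga b, c_de b), e_b b)]
     | (ins.1.1 \in S) && (ins.1.2 \in S)].

Definition instr2 S := flatten [seq step2_instr (S1 S) c | c <- blocks].
Definition pairs2 S := [seq ins.1 | ins <- instr2 S].
Definition S2 S : {set Vtx k} := S1 S :\: [set v | in_pairs (pairs2 S) v].

Definition step3_instr (S : {set Vtx k}) (c : Vtx k) : seq (Vtx k * seq {set Edge k}) :=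
  let a := cellA c in
  [seq ins <- [:: (c_be a, [:: e_t a]); (c_ga a, [:: e_l a]); (c_de a, [:: e_l a; e_b a])]
     | ins.1 \in S].

Definition instr3 S := flatten [seq step3_instr (S2 S) c | c <- blocks].

Definition all_flips S : seq {set Edge k} :=
  flatten [seq step1_flips S c | c <- blocks] ++
  [seq ins.2 | ins <- instr2 S] ++
  flatten [seq ins.2 | ins <- instr3 S].

Definition reduction_output S : {set Edge k} :=
  [set ed : Edge k | odd (count (fun F : {set Edge k} => ed \in F) (all_flips S))].

End Procedure.

Arguments pairs1 k i S : clear implicits.
Arguments pairs2 k i S : clear implicits.
Arguments instr3 k i S : clear implicits.
Arguments reduction_output k i S : clear implicits.

From mathcomp Require Import all_boot all_algebra.
From mathcomp Require Import ring.
Set Implicit Arguments. Unset Strict Implicit. Unset Printing Implicit Defensive.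
Import GRing.Theory.

(* Write h = h_i.  Every coordinate offset occurring in the procedure is a
   multiple of h, and a vertex of V_i lies in V_(i-1) iff both coordinates are
   even multiples of h.  So the parities of (x/h, y/h) of a vertex determine
   the only corner it can occupy in a D, C, B or A cell, and the block is then
   determined by the vertex: a vertex has at most one Step 1 partner, at most
   two candidate Step 2 partners (which form a diagonal of a D cell, so cannot
   both survive Step 1), and at most one Step 3 shift.
   Flipping a straight path changes the syndrome exactly at its two ends, so
   modulo 2 the syndrome of the output at a vertex v outside V_(i-1) counts
   the Step 1 and Step 2 pairs through v and the Step 3 shift of v (shifts end
   in V_(i-1)); by uniqueness this is exactly [v \in S]. *)

Section PairDegree.
Variable T : eqType.
Implicit Types (ps : seq (T * T)) (u v : T).

Definition pair_degree ps v : nat := \sum_(p <- ps) ((p.1 == v) + (p.2 == v)).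

Lemma pair_degree_cat ps1 ps2 v :
  pair_degree (ps1 ++ ps2) v = pair_degree ps1 v + pair_degree ps2 v.
Proof. exact: big_cat. Qed.

Lemma pair_degree_flatten (U : Type) (f : U -> seq (T * T)) (s : seq U) v :
  pair_degree (flatten [seq f c | c <- s]) v = \sum_(c <- s) pair_degree (f c) v.
Proof. by rewrite /pair_degree big_flatten big_map. Qed.

Lemma has_pair_degree ps v :
  has (fun p => (p.1 == v) || (p.2 == v)) ps = (0 < pair_degree ps v).
Proof.
elim: ps => [|p ps IH]; first by rewrite /pair_degree big_nil.
by rewrite /pair_degree big_cons /= IH addn_gt0; case: (p.1 == v); case: (p.2 == v).
Qed.

Lemma pair_degree_if (b : bool) (x y : T) v :
  pair_degree (if b then [:: (x, y)] else [::]) v = b * ((x == v) + (y == v)).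
Proof. by case: b; rewrite /pair_degree ?big_seq1 ?big_nil ?mul1n. Qed.

Lemma pair_degree_filter_map (U : eqType) (P : pred ((T * T) * U)) s v :
  pair_degree [seq x.1 | x <- filter P s] v =
  \sum_(x <- s) P x * ((x.1.1 == v) + (x.1.2 == v)).
Proof.
rewrite /pair_degree big_map big_filter big_mkcond.
by apply: eq_bigr => x _; case: (P x); rewrite ?mul1n.
Qed.

End PairDegree.

Lemma card_partners_le_degree (T : finType) (ps : seq (T * T)) u :
  #|[set v | ((u, v) \in ps) || ((v, u) \in ps)]| <= pair_degree ps u.
Proof.
pose partner (p : T * T) := if p.1 == u then p.2 else p.1.
pose s := [seq partner p | p <- ps & (p.1 == u) || (p.2 == u)].
apply: (@leq_trans #|s|); last first.
  rewrite (leq_trans (card_size s)) // size_map size_filter -sum1_count big_mkcond /=.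
  by apply: leq_sum => p _; case: (p.1 == u); case: (p.2 == u).
apply: subset_leq_card; apply/subsetP => v; rewrite inE => /orP[] uv; apply/mapP.
- by exists (u, v); rewrite /partner ?mem_filter /= ?eqxx.
- exists (v, u); first by rewrite mem_filter eqxx orbT.
  by rewrite /partner /=; case: eqP.
Qed.

Lemma sum_mul_eq_uniq (I : eqType) (s : seq I) (F : I -> nat) d : uniq s ->
  \sum_(c <- s) F c * (c == d) = (d \in s) * F d.
Proof.
elim: s => [|c s IH]; first by rewrite big_nil.
case/andP=> cs us; rewrite big_cons IH // inE eq_sym.
case: eqP => [->|_] /=; last by rewrite muln0.
by rewrite (negPf cs) muln1 mul1n addn0.
Qed.

Lemma addn_bool_le1 (b1 b2 : bool) : ~~ (b1 && b2) -> b1 + b2 <= 1.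
Proof. by case: b1; case: b2. Qed.

Lemma odd_leq1 n : n <= 1 -> odd n = (0 < n).
Proof. by case: n => [|[]]. Qed.

Lemma odd_sum (I : Type) (s : seq I) (P : pred I) (F : I -> nat) :
  odd (\sum_(x <- s | P x) F x) = \big[addb/false]_(x <- s | P x) odd (F x).
Proof. by apply: big_morph => [m n|]; rewrite ?oddD. Qed.

Lemma eq_odd_sum (I : eqType) (s : seq I) (F G : I -> nat) :
  {in s, forall x, odd (F x) = odd (G x)} ->
  odd (\sum_(x <- s) F x) = odd (\sum_(x <- s) G x).
Proof. by move=> FG; rewrite !odd_sum; apply: eq_big_seq. Qed.

Lemma count_sum (I : Type) (a : pred I) (s : seq I) : count a s = \sum_(x <- s) a x.
Proof. by rewrite -sumn_count sumnE big_map. Qed.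

Lemma odd_card_xor (T : finType) (p q : pred T) :
  odd #|[set x | p x (+) q x]| = odd #|[set x | p x]| (+) odd #|[set x | q x]|.
Proof.
have oddE (r : pred T) : odd #|[set x | r x]| = \big[addb/false]_x r x.
  by rewrite -sum1dep_card odd_sum big_mkcond; apply: eq_bigr => x _; case: (r x).
by rewrite !oddE -big_split.
Qed.

Local Open Scope ring_scope.

Lemma off_add k (p : Vtx k) a b c d : off (off p a b) c d = off p (a + c) (b + d).
Proof. by rewrite /off /= !intrD !addrA. Qed.

Lemma off0 k (p : Vtx k) : off p 0 0 = p.
Proof. by case: p => x y; rewrite /off /= !addr0. Qed.

Lemma off_eqE k (c v : Vtx k) a b : (off c a b == v) = (c == off v (- a) (- b)).
Proof. by apply/eqP/eqP => [<-|->]; rewrite off_add ?subrr ?addNr off0. Qed.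

(* [hpath p n] and [vpath p n] are [[set (shift b p j, b) | j : 'I_n]] for
   [b = false] and [b = true]. *)
Definition shift k (b : bool) (p : Vtx k) (j : nat) : Vtx k :=
  if b then off p 0 j%:Z else off p j%:Z 0.

Lemma ends2_shift k b (p : Vtx k) j : ends2 (shift b p j, b) = shift b p j.+1.
Proof. by case: b; rewrite /ends2 /shift /= off_add addr0 -PoszD addn1. Qed.

Lemma sigma_xor k (A B : {set Edge k}) v :
  v \in sigma [set ed | (ed \in A) (+) (ed \in B)] = (v \in sigma A) (+) (v \in sigma B).
Proof.
rewrite !inE -odd_card_xor; congr (odd _); apply: eq_card => ed; rewrite !inE.
by case: (ed \in A); case: (ed \in B); case: incident.
Qed.

Lemma sigma0 k v : v \in sigma (set0 : {set Edge k}) = false.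
Proof.
by rewrite inE (eq_card0 (A := [set ed in set0 | incident v ed])) // => ed; rewrite !inE.
Qed.

Lemma sigma_odd_count k (L : seq {set Edge k}) v :
  v \in sigma [set ed | odd (count (fun F : {set Edge k} => ed \in F) L)] =
  odd (count (fun F => v \in sigma F) L).
Proof.
elim: L => [|F L IH] /=.
  by rewrite (_ : [set ed | _] = set0) ?sigma0 //; apply/setP => ed; rewrite !inE.
rewrite oddD oddb -IH -sigma_xor; apply: (congr1 (fun X => v \in sigma X)).
by apply/setP => ed; rewrite !inE oddD oddb.
Qed.

Lemma edge_not_loop k (e : Edge k) : e.1 != ends2 e.
Proof.
case: e => -[x y] [] /=; rewrite /ends2 /off /= xpair_eqE.
  rewrite -{1}[y]addr0 (inj_eq (addrI y)) [0 == _]eq_sym.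
  by rewrite -[1%:~R]/(1 : 'Z_(2 ^ k)) oner_eq0 andbF.
rewrite -{1}[x]addr0 (inj_eq (addrI x)) [0 == _]eq_sym.
by rewrite -[1%:~R]/(1 : 'Z_(2 ^ k)) oner_eq0.
Qed.

Lemma sigma_edge k (e : Edge k) v :
  v \in sigma [set e] = (e.1 == v) (+) (ends2 e == v).
Proof.
have e_nloop := edge_not_loop e; rewrite inE.
have [ve|nve] := boolP (incident v e).
- rewrite (_ : [set ed in [set e] | incident v ed] = [set e]) ?cards1; last first.
    by apply/setP => ed; rewrite !inE; case: eqP => // ->.
  move: ve; rewrite /incident; case: (eqVneq e.1 v) => [<-|_] /= => [_|->] //.
  by rewrite eq_sym (negPf e_nloop).
- rewrite (_ : [set ed in [set e] | incident v ed] = set0) ?cards0; last first.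
    by apply/setP => ed; rewrite !inE; case: eqP => // ->; rewrite (negPf nve).
  by move: nve; rewrite /incident negb_or => /andP[/negPf-> /negPf->].
Qed.

Lemma sigma_setU1 k (e : Edge k) (A : {set Edge k}) v : e \notin A ->
  v \in sigma (e |: A) = (v \in sigma [set e]) (+) (v \in sigma A).
Proof.
move=> eA; rewrite -sigma_xor; apply: (congr1 (fun X => v \in sigma X)).
by apply/setP => ed; rewrite !inE; case: eqP => [->|]; rewrite ?(negPf eA).
Qed.

Section Torus.
Variable k : nat.
Hypothesis k_gt0 : (0 < k)%N.
Local Notation Z := 'Z_(2 ^ k).

Lemma pow2_gt1 : (1 < 2 ^ k)%N.
Proof. by rewrite -[1%N]/(2 ^ 0)%N ltn_exp2l. Qed.

Lemma val_Zp_add (x y : Z) : (x + y)%R = ((x + y) %% 2 ^ k)%N :> nat.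
Proof. by rewrite [LHS]/=; congr (_ %% _)%N; exact: Zp_cast pow2_gt1. Qed.

Lemma ltn_Zp (x : Z) : (x < 2 ^ k)%N.
Proof. by rewrite -[X in (_ < X)%N](Zp_cast pow2_gt1) ltn_ord. Qed.

Lemma natr_Zp_inj : {in gtn (2 ^ k)%N &, injective (fun j : nat => j%:R : Z)}.
Proof.
move=> j j' lt_j lt_j' /(congr1 (@nat_of_ord _)).
by rewrite !(val_Zp_nat pow2_gt1) !modn_small.
Qed.

Lemma shift_inj b (p : Vtx k) : {in gtn (2 ^ k)%N &, injective (shift b p)}.
Proof.
move=> j j' lt_j lt_j' E; apply: natr_Zp_inj => //.
by case: b E => [/(congr1 snd)|/(congr1 fst)] /= /addrI.
Qed.

Lemma sigma_straight_path b (p : Vtx k) n v : (n <= 2 ^ k)%N ->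
  v \in sigma [set (shift b p j, b) | j : 'I_n] = (p == v) (+) (shift b p n == v).
Proof.
elim: n v => [|n IH] v lt_n.
  rewrite (_ : [set _ | j : 'I_0] = set0) ?sigma0; last first.
    by apply/setP => ed; rewrite inE; apply/negbTE/imsetP => -[[]].
  by rewrite /shift; case: b; rewrite off0 addbb.
have Pn : [set (shift b p j, b) | j : 'I_n.+1] =
          (shift b p n, b) |: [set (shift b p j, b) | j : 'I_n].
  apply/setP => ed; rewrite !inE; apply/imsetP/orP => [[j _ ->]|[/eqP->|/imsetP[j _ ->]]].
  - have [jn|jn] := ltnP j n; first by right; apply/imsetP; exists (Ordinal jn).
    by left; rewrite (_ : j = n :> nat) //; apply/eqP; rewrite eqn_leq jn -ltnS ltn_ord.
  - by exists ord_max.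
  - by exists (widen_ord (leqnSn n) j).
rewrite Pn sigma_setU1; last first.
  apply/imsetP => -[j _ [E]]; have := ltn_ord j.
  by rewrite -(shift_inj _ _ E) ?ltnn ?inE // (ltn_trans (ltn_ord j)).
by rewrite IH 1?ltnW // sigma_edge ends2_shift /= addbC -addbA addKb.
Qed.

Lemma sigma_hpath (p : Vtx k) n v : (n <= 2 ^ k)%N ->
  v \in sigma (hpath p n) = (p == v) (+) (off p n%:Z 0 == v).
Proof. exact: (sigma_straight_path false p). Qed.

Lemma sigma_vpath (p : Vtx k) n v : (n <= 2 ^ k)%N ->
  v \in sigma (vpath p n) = (p == v) (+) (off p 0 n%:Z == v).
Proof. exact: (sigma_straight_path true p). Qed.

End Torus.

Lemma dvdn_mod d n a : (d %| n)%N -> (d %| a %% n)%N = (d %| a)%N.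
Proof. by move=> dn; rewrite {2}(divn_eq a n) dvdn_addr // dvdn_mull. Qed.

Lemma dvdn_2mul d a : (0 < d)%N -> (2 * d %| a)%N = (d %| a)%N && ~~ odd (a %/ d).
Proof.
move=> d_gt0; have [da|nda] /= := boolP (d %| a)%N.
  by rewrite -{1}(divnK da) dvdn_pmul2r // dvdn2.
by apply: contraNF nda; apply: dvdn_trans; rewrite dvdn_mull.
Qed.

Lemma mem_Vset k j (v : Vtx k) : (0 < k)%N -> (j <= k)%N ->
  (v \in Vset k j) = (hh k j %| v.1)%N && (hh k j %| v.2)%N.
Proof.
move=> k_gt0 jk; have hd : (hh k j %| 2 ^ k)%N by rewrite dvdn_exp2l // leq_subr.
apply/imset2P/andP => [[a b _ _ ->]|[d1 d2]].
  by split; rewrite /= (val_Zp_nat (pow2_gt1 k_gt0)) dvdn_mod // dvdn_mull.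
have lt_div (x : 'Z_(2 ^ k)) : (x %/ hh k j < 2 ^ k)%N.
  exact: leq_ltn_trans (leq_div _ _) (ltn_Zp k_gt0 x).
exists (Ordinal (lt_div v.1)) (Ordinal (lt_div v.2)) => //=; rewrite !divnK //.
case: v {d1 d2} => x y; congr pair; apply: val_inj.
  by rewrite /= (val_Zp_nat (pow2_gt1 k_gt0)) modn_small // ltn_Zp.
by rewrite /= (val_Zp_nat (pow2_gt1 k_gt0)) modn_small // ltn_Zp.
Qed.

Section Grid.
Variables k i : nat.
Hypothesis i_range : (1 <= i <= k)%N.
Local Notation h := (hh k i).
Local Notation Z := 'Z_(2 ^ k).

Lemma hh_gt0 : (0 < h)%N.
Proof. by rewrite expn_gt0. Qed.

Lemma k_gt0 : (0 < k)%N.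
Proof. by case/andP: i_range; apply: leq_trans. Qed.

Lemma expn_hh : (2 ^ k = 2 ^ i * h)%N.
Proof. by case/andP: i_range => _ le_ik; rewrite -expnD subnKC. Qed.

Lemma hh_lt : (h < 2 ^ k)%N.
Proof. by rewrite /hh ltn_exp2l // ltn_subrL k_gt0 andbT; case/andP: i_range. Qed.

Definition hdvd (x : Z) : bool := (h %| x)%N.
Definition hodd (x : Z) : bool := odd (x %/ h).
Definition hstep : Z := h%:R.

Lemma val_hstep : hstep = h :> nat.
Proof. by rewrite (val_Zp_nat (pow2_gt1 k_gt0)) modn_small // hh_lt. Qed.

Lemma hodd_addh x : hodd (x + hstep) = ~~ hodd x.
Proof.
rewrite /hodd val_Zp_add ?k_gt0 // val_hstep; move: (x : nat) => a.
rewrite expn_hh divn_modl ?dvdn_mull // mulnK ?hh_gt0 // odd_mod.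
  by rewrite divnDr // divnn hh_gt0 addn1.
by case/andP: i_range; case: (i) => // j; rewrite expnS oddM.
Qed.

Lemma hodd_subh x : hodd (x - hstep) = ~~ hodd x.
Proof. by rewrite -{2}(subrK hstep x) hodd_addh negbK. Qed.

Lemma hdvd_addh x : hdvd (x + hstep) = hdvd x.
Proof.
rewrite /hdvd val_Zp_add ?k_gt0 // val_hstep; move: (x : nat) => a.
by rewrite dvdn_mod ?dvdn_addl // expn_hh dvdn_mull.
Qed.

Lemma hdvd_subh x : hdvd (x - hstep) = hdvd x.
Proof. by rewrite -{2}(subrK hstep x) hdvd_addh. Qed.

Lemma mem_Vi (v : Vtx k) : (v \in Vset k i) = hdvd v.1 && hdvd v.2.
Proof. by rewrite mem_Vset ?k_gt0 //; case/andP: i_range. Qed.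

Lemma mem_Vi1 (v : Vtx k) :
  (v \in Vset k (i - 1)) = [&& hdvd v.1, hdvd v.2, ~~ hodd v.1 & ~~ hodd v.2].
Proof.
rewrite mem_Vset ?k_gt0 ?(leq_trans (leq_subr _ _)) //; last by case/andP: i_range.
have -> : hh k (i - 1) = (2 * h)%N.
  by case/andP: i_range => i_gt0 ik; rewrite /hh -expnS subnBA // addn1 subSn.
by rewrite !dvdn_2mul ?hh_gt0 // -!andbA; do !bool_congr.
Qed.

End Grid.

Section Reduction.
Variables (k i : nat) (S : {set Vtx k}).
Hypotheses (i_range : (1 <= i <= k)%N) (S_sub : S \subset Vset k i).

Local Notation h := (hh k i)%:Z.
Local Notation blocks := (blocks k i).
Local Notation hodd := (hodd i).
Local Notation hdvd := (hdvd i).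
Local Notation S1 := (S1 i S).
Local Notation S2 := (S2 i S).

Let intr_hh : (h%:~R : 'Z_(2 ^ k)) = hstep k i. Proof. by []. Qed.
Let intr0 : ((0 : int)%:~R : 'Z_(2 ^ k)) = 0. Proof. by []. Qed.
Let hodd_addh := hodd_addh i_range.
Let hodd_subh := hodd_subh i_range.
Let hdvd_addh := hdvd_addh i_range.
Let hdvd_subh := hdvd_subh i_range.
Let hh_le : (hh k i <= 2 ^ k)%N := ltnW (hh_lt i_range).
Let k_gt0 := k_gt0 i_range.

Lemma mem_blocks c : (c \in blocks) = [&& hdvd c.1, hdvd c.2, ~~ hodd c.1 & ~~ hodd c.2].
Proof. by rewrite mem_enum (mem_Vi1 i_range). Qed.

(* Offsets are multiples of [h]: each step [+- h] flips the [h]-parity. *)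
Ltac simpl_mem_blocks :=
  rewrite ?mem_blocks /off /=
          ?(intrD, intrN, intr_hh, intr0, opprD, opprK, addrA, addr0, oppr0)
          ?hodd_addh ?hodd_subh ?hdvd_addh ?hdvd_subh ?negbK.

Lemma sigma_e_t (a v : Vtx k) : v \in sigma (e_t i a) = (c_al a == v) (+) (c_be i a == v).
Proof. by rewrite /e_t sigma_hpath. Qed.

Lemma sigma_e_b (a v : Vtx k) : v \in sigma (e_b i a) = (c_ga i a == v) (+) (c_de i a == v).
Proof. by rewrite /e_b sigma_hpath // /c_ga /c_de /= off_add add0r addr0. Qed.

Lemma sigma_e_l (a v : Vtx k) : v \in sigma (e_l i a) = (c_ga i a == v) (+) (c_al a == v).
Proof. by rewrite /e_l sigma_vpath // /c_ga /c_al /= off_add addr0 addNr off0. Qed.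

Lemma sigma_e_r (a v : Vtx k) : v \in sigma (e_r i a) = (c_de i a == v) (+) (c_be i a == v).
Proof. by rewrite /e_r sigma_vpath // /c_be /c_de /= off_add addr0 addNr. Qed.

(* The [h]-parities of a vertex determine the only corner it can occupy in a
   D cell, and that corner determines the block. *)
Lemma pairs1_degree_le1 v : (pair_degree (pairs1 k i S) v <= 1)%N.
Proof.
rewrite /pairs1 pair_degree_flatten.
under eq_bigr => c _ do rewrite /step1_pairs /= pair_degree_cat !pair_degree_if /=
  /c_al /c_be /c_ga /c_de /cellD /= !off_add !off_eqE !mulnDr.
rewrite !big_split /= !sum_mul_eq_uniq ?enum_uniq //; simpl_mem_blocks.
by case: (hodd v.1); case: (hodd v.2); rewrite /= ?andbF ?mul0n ?add0n ?addn0 ?mulnb ?leq_b1.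
Qed.

Lemma odd_step1_flips c v :
  odd (count (fun F => v \in sigma F) (step1_flips i S c)) =
  odd (pair_degree (step1_pairs i S c) v).
Proof.
rewrite /step1_flips /step1_pairs /= pair_degree_cat !pair_degree_if.
case: (_ \in S); case: (_ \in S); case: (_ \in S); case: (_ \in S);
  rewrite [count _ _]/= ?sigma_e_b ?sigma_e_r ?sigma_e_l
          ?mul0n ?mul1n ?addn0 ?add0n ?oddD ?oddb //.
all: by case: (c_al (cellD i c) == v); case: (c_be i (cellD i c) == v);
  case: (c_ga i (cellD i c) == v); case: (c_de i (cellD i c) == v).
Qed.

Lemma odd_count_step1 v :
  odd (count (fun F => v \in sigma F) (flatten [seq step1_flips i S c | c <- blocks])) =
  odd (pair_degree (pairs1 k i S) v).
Proof.
rewrite count_flatten sumnE !big_map /pairs1 pair_degree_flatten.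
by apply: eq_odd_sum => c _; exact: odd_step1_flips.
Qed.

Lemma in_pairs1_S v : in_pairs (pairs1 k i S) v -> v \in S.
Proof.
move=> /hasP[p /flattenP[_ /mapP[c _ ->]]].
suff /allP/[apply]/andP[p1 p2] :
    all (fun q => (q.1 \in S) && (q.2 \in S)) (step1_pairs i S c).
  by case/orP => /eqP <-.
by rewrite all_cat; do 2![case: ifP => /= [/andP[-> ->]|]].
Qed.

Lemma mem_S_step1 v : (v \in S) = in_pairs (pairs1 k i S) v (+) (v \in S1).
Proof.
rewrite [X in _ (+) X]in_setD [X in _ (+) (~~ X && _)]in_set.
by have [/in_pairs1_S ->|] := boolP (in_pairs _ v).
Qed.

Lemma S1_no_D_diagonal_ad c x y : c \in blocks ->
  x = c_al (cellD i c) -> y = c_de i (cellD i c) -> x \in S1 -> y \in S1 -> False.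
Proof.
move=> cB -> -> /setDP[xS /negP xn] /setDP[yS _]; apply: xn; rewrite inE; apply/hasP.
exists (c_al (cellD i c), c_de i (cellD i c)); last by rewrite eqxx.
apply/flattenP; exists (step1_pairs i S c); first by apply/mapP; exists c.
by rewrite /step1_pairs /= xS yS mem_head.
Qed.

Lemma S1_no_D_diagonal_bg c x y : c \in blocks ->
  x = c_be i (cellD i c) -> y = c_ga i (cellD i c) -> x \in S1 -> y \in S1 -> False.
Proof.
move=> cB -> -> /setDP[xS /negP xn] /setDP[yS _]; apply: xn; rewrite inE; apply/hasP.
exists (c_be i (cellD i c), c_ga i (cellD i c)); last by rewrite eqxx.
apply/flattenP; exists (step1_pairs i S c); first by apply/mapP; exists c.
by rewrite /step1_pairs /= xS yS mem_cat orbC mem_head.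
Qed.

Ltac corner_eq :=
  rewrite /c_al /c_be /c_ga /c_de /cellD /cellB /cellC /off /=
          ?(intrD, intrN, intr_hh, intr0); congr pair; ring.

(* The two potential Step 2 partners of a vertex always form a diagonal of the
   D cell of some block, so they cannot both have survived Step 1. *)
Lemma pairs2_degree_le1 v : (pair_degree (pairs2 k i S) v <= 1)%N.
Proof.
rewrite /pairs2 /instr2 map_flatten -map_comp pair_degree_flatten.
under eq_bigr => c _ do rewrite /= pair_degree_filter_map !big_cons big_nil /=
  /c_al /c_be /c_ga /c_de /cellC /cellB /= !off_add !off_eqE !mulnDr !addn0.
rewrite !big_split /= !sum_mul_eq_uniq ?enum_uniq //; simpl_mem_blocks.
case E1: (hodd v.1); case E2: (hodd v.2) => /=;
  rewrite ?andbF ?andbT ?mul0n ?add0n ?addn0 ?mulnb; apply: addn_bool_le1;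
  apply/negP => /andP[/and3P[/andP[D1 D2] M1 M2] /and3P[_ M3 M4]].
- apply: (S1_no_D_diagonal_bg (c := off v (- h) h)) M4 M2;
    [simpl_mem_blocks; by rewrite D1 D2 E1 E2 | corner_eq | corner_eq].
- apply: (S1_no_D_diagonal_ad (c := off v (- h) (h + h))) M1 M4;
    [simpl_mem_blocks; by rewrite D1 D2 E1 E2 | corner_eq | corner_eq].
- apply: (S1_no_D_diagonal_ad (c := off v (- (h + h)) h)) M3 M2;
    [simpl_mem_blocks; by rewrite D1 D2 E1 E2 | corner_eq | corner_eq].
- apply: (S1_no_D_diagonal_bg (c := off v (- (h + h)) (h + h))) M1 M3;
    [simpl_mem_blocks; by rewrite D1 D2 E1 E2 | corner_eq | corner_eq].
Qed.

Lemma sigma_step2_instr (S' : {set Vtx k}) c ins v : ins \in step2_instr i S' c ->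
  v \in sigma ins.2 = (ins.1.1 == v) (+) (ins.1.2 == v).
Proof.
rewrite mem_filter => /andP[_]; rewrite !in_cons in_nil orbF => /or4P[] /eqP->.
- by rewrite addbC; exact: sigma_e_l.
- by rewrite addbC; exact: sigma_e_r.
- exact: sigma_e_t.
- exact: sigma_e_b.
Qed.

Lemma odd_count_step2 v :
  odd (count (fun F => v \in sigma F) [seq ins.2 | ins <- instr2 i S]) =
  odd (pair_degree (pairs2 k i S) v).
Proof.
rewrite count_sum /pairs2 /pair_degree !big_map.
apply: eq_odd_sum => ins /flattenP[_ /mapP[c _ ->]] /sigma_step2_instr->.
by rewrite oddb oddD !oddb.
Qed.

Lemma in_pairs2_S1 v : in_pairs (pairs2 k i S) v -> v \in S1.
Proof.
move=> /hasP[_ /mapP[ins ins_instr ->] ins_v].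
move: ins_instr => /flattenP[_ /mapP[c _ ->]].
rewrite mem_filter => /andP[/andP[x1 x2] _].
by case/orP: ins_v => /eqP <-.
Qed.

Lemma mem_S1_step2 v : (v \in S1) = in_pairs (pairs2 k i S) v (+) (v \in S2).
Proof.
rewrite [X in _ (+) X]in_setD [X in _ (+) (~~ X && _)]in_set.
by have [/in_pairs2_S1 ->|] := boolP (in_pairs _ v).
Qed.

Lemma S2_sub_Vi v : v \in S2 -> v \in Vset k i.
Proof. by move=> /setDP[/setDP[/(subsetP S_sub)]]. Qed.

Lemma count_shifts v :
  count (fun ins => ins.1 == v) (instr3 k i S) = (v \in S2) && (v \notin Vset k (i - 1)).
Proof.
rewrite /instr3 count_flatten sumnE !big_map.
under eq_bigr => c _ do rewrite /step3_instr count_filter /= addn0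
  /c_be /c_ga /c_de /cellA /= !off_eqE ?oppr0 ?opprK
  !(andbC (c == _)) -!(mulnb (_ \in _)).
rewrite !big_split /= !sum_mul_eq_uniq ?enum_uniq // (mem_Vi1 i_range).
simpl_mem_blocks; rewrite ?subrK ?addrK -surjective_pairing.
have [/S2_sub_Vi|] := boolP (v \in S2); last by rewrite !muln0.
rewrite (mem_Vi i_range) => /andP[-> ->].
by case: (hodd v.1); case: (hodd v.2).
Qed.

Lemma odd_count_sigma_step3 (S' : {set Vtx k}) c ins v : ins \in step3_instr i S' c ->
  odd (count (fun F => v \in sigma F) ins.2) = (ins.1 == v) (+) (c == v).
Proof.
rewrite mem_filter => /andP[_]; rewrite !in_cons in_nil orbF => /or3P[] /eqP-> /=.
- by rewrite sigma_e_t addn0 oddb addbC.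
- by rewrite sigma_e_l addn0 oddb.
rewrite sigma_e_b sigma_e_l addn0 oddD !oddb /c_al /cellA.
by case: (c_ga i c == v); case: (c_de i c == v); case: (c == v).
Qed.

Lemma odd_count_step3 v : v \notin Vset k (i - 1) ->
  odd (count (fun F => v \in sigma F) (flatten [seq ins.2 | ins <- instr3 k i S])) =
  odd (count (fun ins => ins.1 == v) (instr3 k i S)).
Proof.
move=> vV; rewrite count_flatten sumnE !big_map count_sum.
apply: eq_odd_sum => ins /flattenP[_ /mapP[c cB ->]] /odd_count_sigma_step3->.
suff /negPf-> : c != v by rewrite addbF oddb.
by apply: contraNneq vV => <-; rewrite -mem_enum.
Qed.

Lemma mem_sigma_output v : v \notin Vset k (i - 1) ->
  (v \in sigma (reduction_output k i S)) = (v \in S).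
Proof.
move=> vV; rewrite /reduction_output sigma_odd_count /all_flips !count_cat !oddD.
rewrite odd_count_step1 odd_count_step2 odd_count_step3 // count_shifts vV andbT oddb.
rewrite !odd_leq1 ?pairs1_degree_le1 ?pairs2_degree_le1 // -!has_pair_degree.
by rewrite mem_S_step1 mem_S1_step2.
Qed.

End Reduction.

Theorem proposition1 (k i : nat) (S : {set Vtx k}) :
  (1 <= i <= k)%N -> S \subset Vset k i ->
  (* Step 1: no vertex is paired with more than one other vertex *)
  (forall u : Vtx k, #|[set v | paired_in (pairs1 k i S) u v]| <= 1)%N /\
  (* Step 2: same, with the syndrome set after Step 1 *)
  (forall u : Vtx k, #|[set v | paired_in (pairs2 k i S) u v]| <= 1)%N /\
  (* Step 3: no vertex is shifted more than once *)
  (forall v : Vtx k, count (fun ins => ins.1 == v) (instr3 k i S) <= 1)%N /\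
  (* S Δ sigma(e_i) ⊆ V_{i-1} *)
  symd S (sigma (reduction_output k i S)) \subset Vset k (i - 1).
Proof.
move=> i_range S_sub; split; [|split; [|split]].
- move=> u; apply: leq_trans (card_partners_le_degree _ u) _.
  exact: pairs1_degree_le1.
- move=> u; apply: leq_trans (card_partners_le_degree _ u) _.
  exact: pairs2_degree_le1.
- by move=> v; rewrite count_shifts // leq_b1.
apply/subsetP => v; apply: contraLR => vV.
by rewrite /symd in_setU !in_setD mem_sigma_output // andNb.
Qed.
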